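(* Let $X$ be a real reflexive Banach space, $f:X\to\mathbb{R}\cup\{+\infty\}$ a lower semicontinuous proper convex function, $f^{FY}(x,x^{\ast}):=f(x)+f^{\ast}(x^{\ast})$, and let $h\in\mathcal{H}(\partial f)$ satisfy $h\le f^{FY}$. Then for every $\epsilon>0$ and $x\in X$, $\breve{T}_h(\tfrac{\epsilon}{2},x)\subset\partial_\epsilon f(x)$.
   Context: $X^{\ast}$ is the dual of $X$ with pairing $\langle\cdot,\cdot\rangle$; $f^{\ast}(x^{\ast})=\sup_x\{\langle x,x^{\ast}\rangle-f(x)\}$, $\partial f$ is the convex subdifferential, and $\partial_\epsilon f(x)=\{x^{\ast}:f(y)-f(x)\ge\langle y-x,x^{\ast}\rangle-\epsilon\ \forall y\}$ if $f(x)<\infty$, $\emptyset$ otherwise. The dual of $X\times X^{\ast}$ is identified with $X^{\ast}\times X$ via $\langle (x,x^{\ast}),(y^{\ast},y)\rangle=\langle x,y^{\ast}\rangle+\langle y,x^{\ast}\rangle$. For a maximally monotone $T$, $\mathcal{H}(T)$ is the family of lower semicontinuous convex $h:X\times X^{\ast}\to\mathbb{R}\cup\{+\infty\}$ with $h(x,x^{\ast})\ge\langle x,x^{\ast}\rangle$ everywhere and equality whenever $x^{\ast}\in T(x)$. For $\eta\ge0$, $\partial_\eta h(z)$ is the set of $(y^{\ast},y)\in X^{\ast}\times X$ with $h(w,w^{\ast})\ge h(z)+\langle (w,w^{\ast})-z,(y^{\ast},y)\rangle-\eta$ for all $(w,w^{\ast})$ when $h(z)<\infty$, and $\emptyset$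 otherwise; $\breve{T}_h(\epsilon,x):=\{x^{\ast}:(x^{\ast},x)\in\partial_{2\epsilon}h(x,x^{\ast})\}$. *)

From HB Require Import structures.
From mathcomp Require Import all_boot all_order all_algebra.
From mathcomp Require Import all_classical all_reals.
From mathcomp Require Import ereal topology normedtype.
Set Implicit Arguments. Unset Strict Implicit. Unset Printing Implicit Defensive.
Import Order.TTheory GRing.Theory Num.Theory.
Import numFieldNormedType.Exports.
Local Open Scope classical_set_scope.
Local Open Scope ring_scope.

(* The (topological) dual X^{*} of a real normed space X: continuous linear
   functionals X -> R.  The pairing <x, x^{*}> is application x^{*} x. *)
Record dual (R : realType) (X : normedModType R) := Dual {
  dual_fun :> X -> R ;
  dual_additive : forall x y, dual_fun (x + y) = dual_fun x + dual_fun y ;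
  dual_scalable : forall (t : R) x, dual_fun (t *: x) = t * dual_fun x ;
  dual_continuous : continuous dual_fun }.

Section Defs.
Variables (R : realType) (X : normedModType R).
Local Notation Xs := (dual X).

Definition dual_norm_le (a : Xs) (c : R) := forall z : X, `|a z| <= c * `|z|.

Definition dual_dist_lt (a b : Xs) (d : R) :=
  exists2 c, c < d & forall z : X, `|a z - b z| <= c * `|z|.

(* Reflexivity: the canonical embedding J : X -> X^{**} is onto, i.e. every
   continuous (= bounded) linear functional on the normed dual X^{*} is the evaluation
   at some point of X. *)
Definition reflexive_space :=
  forall phi : Xs -> R,
    (forall a b c : Xs, (forall z, c z = a z + b z) -> phi c = phi a + phi b) ->
    (forall (t : R) (a b : Xs), (forall z, b z = t * a z) -> phi b = t * phi a) ->
    (exists M : R, forall (a : Xs) (c : R), 0 <= c -> dual_norm_le a c ->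
        `|phi a| <= M * c) ->
    exists x : X, forall a : Xs, phi a = a x.

Local Open Scope ereal_scope.

Definition proper_fun (f : X -> \bar R) :=
  (forall x, f x != -oo) /\ exists x, f x \is a fin_num.

Definition convex_fun (f : X -> \bar R) :=
  forall (x y : X) (t : R), (0 < t < 1)%R ->
    f (t *: x + (1 - t) *: y)%R <= t%:E * f x + (1 - t)%R%:E * f y.

Definition fconj (f : X -> \bar R) (a : Xs) : \bar R :=
  ereal_sup [set (a x)%:E - f x | x in [set: X]].

Definition fFY (f : X -> \bar R) (p : X * Xs) : \bar R := f p.1 + fconj f p.2.

Definition eps_subdiff (f : X -> \bar R) (eps : R) (x : X) : set Xs :=
  [set a | f x \is a fin_num /\
     forall y : X, f y - f x >= (a y - a x - eps)%R%:E].

Definition subdiff (f : X -> \bar R) (x : X) : set Xs := eps_subdiff f 0 x.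

(* lower semicontinuity on X x X^{*} for the (strong) norm topology *)
Definition lsc_XXs (h : X * Xs -> \bar R) :=
  forall (x : X) (a : Xs) (r : R), r%:E < h (x, a) ->
    exists2 d : R, (0 < d)%R & forall (y : X) (b : Xs),
      (`|y - x| < d)%R -> dual_dist_lt b a d -> r%:E < h (y, b).

(* convexity on X x X^{*} (the convex combination in X^{*} written pointwise) *)
Definition convex_XXs (h : X * Xs -> \bar R) :=
  forall (x y : X) (a b c : Xs) (t : R), (0 < t < 1)%R ->
    (forall z, c z = t * a z + (1 - t) * b z)%R ->
    h ((t *: x + (1 - t) *: y)%R, c) <= t%:E * h (x, a) + (1 - t)%R%:E * h (y, b).

Definition HT (T : X -> set Xs) (h : X * Xs -> \bar R) :=
  (forall p, h p != -oo) /\ lsc_XXs h /\ convex_XXs h /\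
  (forall (x : X) (a : Xs), (a x)%:E <= h (x, a)) /\
  (forall (x : X) (a : Xs), T x a -> h (x, a) = (a x)%:E).

Definition eps_subdiff_h (h : X * Xs -> \bar R) (eta : R) (z : X * Xs)
    : set (Xs * X) :=
  [set q : Xs * X | h z \is a fin_num /\
     forall (w : X) (ws : Xs),
       h (w, ws) >= h z + (q.1 w - q.1 z.1 + ws q.2 - z.2 q.2 - eta)%R%:E].

Definition breveT (h : X * Xs -> \bar R) (eps : R) (x : X) : set Xs :=
  [set a | eps_subdiff_h h (2 * eps)%R (x, a) (a, x)].

End Defs.

From HB Require Import structures.
From mathcomp Require Import all_boot all_order all_algebra.
From mathcomp Require Import all_classical all_reals.
From mathcomp Require Import ereal topology normedtype.
From mathcomp Require Import ring lra.
Set Implicit Arguments. Unset Strict Implicit. Unset Printing Implicit Defensive.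
Import Order.TTheory GRing.Theory Num.Theory.
Import numFieldNormedType.Exports.
Local Open Scope classical_set_scope.
Local Open Scope ring_scope.

(* Suppose a lies in breveT h (eps/2) x but f x > f y - a y + a x + eps for some y.
   A continuous affine minorant z |-> b z - b x + c of f with c above that bound
   gives f^*(b) <= b x - c; evaluating the defining inequality of the
   eps-subdifferential of h at (y, b), with h <= f^FY and a x <= h (x, a), forces
   c <= f y - a y + a x + eps, a contradiction.  The affine minorant is a
   subgradient of the Lipschitz convex envelope inf_y f y + M |z - y|, which stays
   above c at x for M large; the subgradient comes from the Hahn-Banach theorem
   (via Zorn: a minimal sublinear functional is linear) applied to the directional
   derivative. *)

Section HahnBanach.
Variables (R : realType) (V : lmodType R).

Definition sublinear (q : V -> R) :=
  (forall u v, q (u + v) <= q u + q v) /\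
  (forall (t : R) v, 0 < t -> q (t *: v) = t * q v).

Lemma sublinear0 q : sublinear q -> q 0 = 0.
Proof. by move=> [_ qZ]; have := qZ 2 0 (ltr0Sn _ 1); rewrite scaler0; lra. Qed.

Lemma sublinearZ q : sublinear q -> forall (t : R) v, 0 <= t -> q (t *: v) = t * q v.
Proof.
move=> sq t v; rewrite le_eqVlt => /orP[/eqP<-|t0]; last exact: sq.2.
by rewrite scale0r mul0r sublinear0.
Qed.

Lemma sublinearN_le q : sublinear q -> forall v, - q (- v) <= q v.
Proof. by move=> sq v; have := sq.1 v (- v); rewrite subrr sublinear0 //; lra. Qed.

Definition descent (q : V -> R) (x y : V) :=
  inf [set q (y + t *: x) - t * q x | t in [set t : R | 0 <= t]].

Section Descent.
Variables (q : V -> R) (x : V).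
Hypothesis sq : sublinear q.

Let descent_set y := [set q (y + t *: x) - t * q x | t in [set t : R | 0 <= t]].

Let descent_set_lb y : lbound (descent_set y) (- q (- y)).
Proof.
move=> _ [t t0 <-]; have := sq.1 (y + t *: x) (- y).
by rewrite addrAC subrr add0r sublinearZ //; lra.
Qed.

Let descent_has_inf y : has_inf (descent_set y).
Proof.
split; last by exists (- q (- y)); exact: descent_set_lb.
by exists (q y), 0; rewrite ?inE //= scale0r addr0 mul0r subr0.
Qed.

Lemma descent_le_shift y t : 0 <= t -> descent q x y <= q (y + t *: x) - t * q x.
Proof. by move=> t0; apply: ge_inf; [exists (- q (- y)) => r /descent_set_lb|exists t]. Qed.

Let le_descent y b : (forall t, 0 <= t -> b <= q (y + t *: x) - t * q x) ->
  b <= descent q x y.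
Proof. by move=> H; apply: lb_le_inf; [case: (descent_has_inf y)|move=> _ [t /H ? <-]]. Qed.

Lemma descent_le y : descent q x y <= q y.
Proof. by have := descent_le_shift y (lexx 0); rewrite scale0r addr0 mul0r subr0. Qed.

Lemma descent_sublinear : sublinear (descent q x).
Proof.
split=> [u v|t v t0].
- apply/ler_addgt0Pr => e e0; have e20 : 0 < e / 2 by rewrite divr_gt0.
  have [_ [t1 t10 <-] lt1] := inf_adherent e20 (descent_has_inf u).
  have [_ [t2 t20 <-] lt2] := inf_adherent e20 (descent_has_inf v).
  have := descent_le_shift (u + v) (addr_ge0 t10 t20).
  rewrite scalerDl addrACA.
  have := sq.1 (u + t1 *: x) (v + t2 *: x).
  rewrite /descent in lt1 lt2 *; lra.
- apply/eqP; rewrite eq_le; apply/andP; split.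
  + rewrite -ler_pdivrMl //; apply: le_descent => s s0.
    have := descent_le_shift (t *: v) (mulr_ge0 (ltW t0) s0).
    by rewrite -scalerA -scalerDr sq.2 // ler_pdivrMl // mulrBr mulrA.
  + apply: le_descent => s s0.
    have := descent_le_shift v (divr_ge0 s0 (ltW t0)).
    rewrite -(ler_pM2l t0) => /le_trans; apply.
    have st : t * (s / t) = s by rewrite mulrCA divff ?mulr1 // gt_eqF.
    by rewrite mulrBr -sq.2 // scalerDr scalerA st mulrA st.
Qed.

Lemma descent_opp_le : descent q x (- x) <= - q x.
Proof. by have := descent_le_shift (- x) ler01; rewrite scale1r addNr sublinear0 // mul1r sub0r. Qed.

End Descent.

Lemma minimal_sublinear_odd q : sublinear q ->
  (forall q', sublinear q' -> (forall v, q' v <= q v) -> forall v, q v <= q' v) ->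
  forall v, q (- v) = - q v.
Proof.
move=> sq qmin v; apply/eqP; rewrite eq_le; apply/andP; split.
- apply: le_trans (descent_opp_le v sq).
  exact: qmin (descent_sublinear v sq) (descent_le v sq) (- v).
- by have := sublinearN_le sq v; lra.
Qed.

Lemma odd_sublinear_linear q : sublinear q -> (forall v, q (- v) = - q v) ->
  (forall u v, q (u + v) = q u + q v) /\ (forall (t : R) v, q (t *: v) = t * q v).
Proof.
move=> sq qN; split=> [u v|t v].
- have := sq.1 u v; have := sq.1 (- u) (- v).
  rewrite -opprD !qN => h1 h2; apply/eqP; rewrite eq_le; apply/andP; split; lra.
- case: (ltgtP t 0) => [t0|t0|->]; last by rewrite scale0r mul0r sublinear0.
  + by rewrite -[t *: v]opprK -scaleNr -scalerN sq.2 ?oppr_gt0 // qN mulrNN.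
  + exact: sq.2.
Qed.

Definition chain_inf (F : set (V -> R)) (v : V) := inf [set k v | k in F].

Section ChainInf.
Variables (F : set (V -> R)) (p : V -> R).
Hypotheses (Fp : F p) (Fsub : forall k, F k -> sublinear k /\ forall v, k v <= p v).

Let chain_lb v : lbound [set k v | k in F] (- p (- v)).
Proof. by move=> _ [k /Fsub[sk kp] <-]; have := sublinearN_le sk v; have := kp (- v); lra. Qed.

Let chain_has_inf v : has_inf [set k v | k in F].
Proof. by split; [exists (p v), p|exists (- p (- v)); exact: chain_lb]. Qed.

Lemma chain_inf_le k v : F k -> chain_inf F v <= k v.
Proof. by move=> Fk; apply: ge_inf; [exists (- p (- v)); exact: chain_lb|exists k]. Qed.

Lemma chain_inf_sublinear :
  (forall k1 k2, F k1 -> F k2 -> (forall v, k1 v <= k2 v) \/ (forall v, k2 v <= k1 v)) ->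
  sublinear (chain_inf F).
Proof.
move=> Ftot; split=> [u v|t v t0].
- apply/ler_addgt0Pr => e e0; have e20 : 0 < e / 2 by rewrite divr_gt0.
  have [_ [k1 Fk1 <-] lt1] := inf_adherent e20 (chain_has_inf u).
  have [_ [k2 Fk2 <-] lt2] := inf_adherent e20 (chain_has_inf v).
  have [k [Fk ku kv]] : exists k, [/\ F k, k u <= k1 u & k v <= k2 v].
    by case: (Ftot _ _ Fk1 Fk2) => le12; [exists k1|exists k2].
  have := chain_inf_le (u + v) Fk; have := (Fsub Fk).1.1 u v.
  rewrite /chain_inf in lt1 lt2 *; lra.
- apply/eqP; rewrite eq_le; apply/andP; split.
  + rewrite -ler_pdivrMl //; apply: lb_le_inf; first by case: (chain_has_inf v).
    move=> _ [k Fk <-]; rewrite ler_pdivrMl // -(Fsub Fk).1.2 //.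
    exact: chain_inf_le.
  + apply: lb_le_inf; first by case: (chain_has_inf (t *: v)).
    move=> _ [k Fk <-]; rewrite (Fsub Fk).1.2 // ler_pM2l //.
    exact: chain_inf_le.
Qed.

End ChainInf.

Theorem hahn_banach p : sublinear p -> exists L : V -> R,
  [/\ forall u v, L (u + v) = L u + L v,
      forall (t : R) v, L (t *: v) = t * L v & forall v, L v <= p v].
Proof.
move=> sp.
pose T := {q : V -> R | sublinear q /\ forall v, q v <= p v}.
pose below (s t : T) := `[< forall v, sval t v <= sval s v >].
have [| | |m mmax] := @ZL_preorder T (exist _ p (conj sp (fun v => lexx _))) below.
- by move=> t; apply/asboolP.
- move=> r s t /asboolP rs /asboolP st; apply/asboolP => v.
  exact: le_trans (st v) (rs v).
- move=> A Atot; pose F := [set p] `|` [set sval s | s in A].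
  have Fsub k : F k -> sublinear k /\ forall v, k v <= p v.
    by case=> [->|[s _ <-]]; [split|exact: (svalP s)].

  have Ftot k1 k2 : F k1 -> F k2 ->
      (forall v, k1 v <= k2 v) \/ (forall v, k2 v <= k1 v).
    case=> [->|[s1 As1 <-]] [->|[s2 As2 <-]].
    - by left.
    - by right=> v; case: (svalP s2).
    - by left=> v; case: (svalP s1).
    - by have [/asboolP|/asboolP] := Atot s1 s2 As1 As2; [right|left].
  have Fp : F p by left.
  have infp v : chain_inf F v <= p v by have := chain_inf_le Fsub v Fp.
  exists (exist _ (chain_inf F) (conj (chain_inf_sublinear Fp Fsub Ftot) infp)).
  move=> s As; apply/asboolP => v /=.
  have Fs : F (sval s) by right; exists s.
  by have := chain_inf_le Fsub v Fs.
- case: m mmax => q [sq qp] /= mmax.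
  have qmin q' : sublinear q' -> (forall v, q' v <= q v) -> forall v, q v <= q' v.
    move=> sq' q'q; have q'p v : q' v <= p v by exact: le_trans (q'q v) (qp v).
    have /mmax /asboolP // : below (exist _ q (conj sq qp)) (exist _ q' (conj sq' q'p)).
    exact/asboolP.
  have [qD qZ] := odd_sublinear_linear sq (minimal_sublinear_odd sq qmin).
  by exists q.
Qed.

End HahnBanach.

Section Subgradient.
Variables (R : realType) (X : normedModType R).

Lemma bounded_linear_dual (L : X -> R) (M : R) : 0 <= M ->
  (forall u v, L (u + v) = L u + L v) -> (forall (t : R) v, L (t *: v) = t * L v) ->
  (forall v, `|L v| <= M * `|v|) -> exists a : dual X, forall v, a v = L v.
Proof.
move=> M0 LD LZ Lb.
have Lc : continuous L.
  move=> z; apply/cvgrPdist_lt => e e0.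
  apply/nbhs_ballP; exists (e / (M + 1)); first by apply: divr_gt0 => //; lra.
  move=> w; rewrite -ball_normE /= => zw.
  have -> : L z - L w = L (z - w) by rewrite LD -[- w]scaleN1r LZ mulN1r.
  have := Lb (z - w); rewrite ltr_pdivlMr in zw; last lra.
  have := normr_ge0 (z - w); rewrite mulrDr mulr1 in zw; lra.
by exists (Dual LD LZ Lc).
Qed.

Definition real_convex (phi : X -> R) := forall z1 z2 (t : R), 0 < t < 1 ->
  phi (t *: z1 + (1 - t) *: z2) <= t * phi z1 + (1 - t) * phi z2.

Definition lipschitz_with (M : R) (phi : X -> R) :=
  forall z z', phi z <= phi z' + M * `|z - z'|.

Definition diff_quot (phi : X -> R) (x v : X) (t : R) := (phi (x + t *: v) - phi x) / t.

Definition dir_deriv (phi : X -> R) (x v : X) :=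
  inf [set diff_quot phi x v t | t in [set t : R | 0 < t]].

Section DirectionalDerivative.
Variables (phi : X -> R) (M : R) (x : X).
Hypotheses (M0 : 0 <= M) (phi_lip : lipschitz_with M phi) (phi_cvx : real_convex phi).

Let convex_at (l : R) u w z : 0 < l < 1 -> l *: u + (1 - l) *: w = z ->
  phi z <= l * phi u + (1 - l) * phi w.
Proof. by move=> l01 <-; exact: phi_cvx. Qed.

Lemma diff_quot_ge v t : 0 < t -> phi x - phi (x - v) <= diff_quot phi x v t.
Proof.
move=> t0; set l := 1 / (1 + t).
have l01 : 0 < l < 1 by apply/andP; split; rewrite /l ?divr_gt0 ?ltr_pdivrMr; lra.
have : l *: (x + t *: v) + (1 - l) *: (x - v) = x.
  rewrite scalerDr scalerBr scalerA addrACA -scalerDl -scalerBl.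
  have -> : l + (1 - l) = 1 by lra.
  have -> : l * t - (1 - l) = 0 by rewrite /l; field; lra.
  by rewrite scale1r scale0r addr0.
move=> /(convex_at l01) cvx.
have : (1 + t) * phi x <= phi (x + t *: v) + t * phi (x - v).
  have -> : phi (x + t *: v) + t * phi (x - v) =
      (1 + t) * (l * phi (x + t *: v) + (1 - l) * phi (x - v)) by rewrite /l; field; lra.
  by rewrite ler_wpM2l //; lra.
by rewrite /diff_quot ler_pdivlMr //; lra.
Qed.

Lemma diff_quot_mono v s t : 0 < s -> s <= t -> diff_quot phi x v s <= diff_quot phi x v t.
Proof.
move=> s0; rewrite le_eqVlt => /orP[/eqP -> //|st].
have t0 : 0 < t by exact: lt_trans s0 st.
set l := s / t.
have l01 : 0 < l < 1 by rewrite /l divr_gt0 //= ltr_pdivrMr // mul1r.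
have : l *: (x + t *: v) + (1 - l) *: x = x + s *: v.
  rewrite scalerDr scalerA addrAC -scalerDl.
  have -> : l + (1 - l) = 1 by lra.
  have -> : l * t = s by rewrite /l; field; rewrite gt_eqF.
  by rewrite scale1r.
move=> /(convex_at l01) cvx.
rewrite /diff_quot ler_pdivrMr // mulrAC -mulrA -/l; lra.
Qed.

Lemma diff_quot_midpoint u v m : 0 < m ->
  diff_quot phi x (u + v) (m / 2) <= diff_quot phi x u m + diff_quot phi x v m.
Proof.
move=> m0; have half01 : 0 < (2 : R)^-1 < 1 by apply/andP; split; lra.
have : 2^-1 *: (x + m *: u) + (1 - 2^-1) *: (x + m *: v) = x + (m / 2) *: (u + v).
  have -> : 1 - 2^-1 = 2^-1 :> R by field.
  rewrite !scalerDr !scalerA addrACA -scalerDl.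
  have -> : 2^-1 + 2^-1 = 1 :> R by field.
  by rewrite scale1r [2^-1 * m]mulrC.
move=> /(convex_at half01) cvx.
rewrite /diff_quot.
have -> : (phi (x + (m / 2) *: (u + v)) - phi x) / (m / 2) =
    (2 * (phi (x + (m / 2) *: (u + v)) - phi x)) / m by field; rewrite gt_eqF.
rewrite -mulrDl ler_pM2r ?invr_gt0 //; lra.
Qed.

Let dq_set v := [set diff_quot phi x v t | t in [set t : R | 0 < t]].

Let dq_has_inf v : has_inf (dq_set v).
Proof.
split; first by exists (diff_quot phi x v 1), 1 => //=.
by exists (phi x - phi (x - v)) => _ [t t0 <-]; exact: diff_quot_ge.
Qed.

Lemma dir_deriv_le v t : 0 < t -> dir_deriv phi x v <= diff_quot phi x v t.
Proof. by move=> t0; apply: ge_inf; [case: (dq_has_inf v)|exists t]. Qed.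

Let le_dir_deriv v b : (forall t, 0 < t -> b <= diff_quot phi x v t) ->
  b <= dir_deriv phi x v.
Proof. by move=> H; apply: lb_le_inf; [case: (dq_has_inf v)|move=> _ [t /H ? <-]]. Qed.

Lemma dir_deriv_sublinear : sublinear (dir_deriv phi x).
Proof.
split=> [u v|t v t0].
- apply/ler_addgt0Pr => e e0; have e20 : 0 < e / 2 by rewrite divr_gt0.
  have [_ [t1 t10 <-] lt1] := inf_adherent e20 (dq_has_inf u).
  have [_ [t2 t20 <-] lt2] := inf_adherent e20 (dq_has_inf v).
  have [m [m0 m1 m2]] : exists m, [/\ 0 < m, m <= t1 & m <= t2].
    by case: (leP t1 t2) => ?; [exists t1|exists t2]; split => //; lra.
  have := diff_quot_mono u m0 m1; have := diff_quot_mono v m0 m2.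
  have := dir_deriv_le (u + v) (divr_gt0 m0 (ltr0Sn _ 1)).
  have := diff_quot_midpoint u v m0.
  rewrite /dir_deriv in lt1 lt2 *; lra.
- have dqZ s : 0 < s -> diff_quot phi x (t *: v) s = t * diff_quot phi x v (s * t).
    by move=> s0; rewrite /diff_quot scalerA; field; rewrite !gt_eqF.
  apply/eqP; rewrite eq_le; apply/andP; split.
  + rewrite -ler_pdivrMl //; apply: le_dir_deriv => s s0; rewrite ler_pdivrMl //.
    have := dir_deriv_le (t *: v) (divr_gt0 s0 t0).
    by rewrite dqZ ?divr_gt0 // divfK ?gt_eqF.
  + apply: le_dir_deriv => s s0; rewrite dqZ // ler_pM2l //.
    exact/dir_deriv_le/mulr_gt0.
Qed.

Lemma dir_deriv_le_norm v : dir_deriv phi x v <= M * `|v|.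
Proof.
have := dir_deriv_le v ltr01; rewrite /diff_quot scale1r divr1.
by have := phi_lip (x + v) x; rewrite addrAC subrr add0r; lra.
Qed.

Lemma dir_deriv_le_diff z : dir_deriv phi x (z - x) <= phi z - phi x.
Proof. by have := dir_deriv_le (z - x) ltr01; rewrite /diff_quot scale1r divr1 [x + _]addrC subrK. Qed.

Lemma lipschitz_convex_subgradient : exists a : dual X, forall z, a z - a x <= phi z - phi x.
Proof.
have [L [LD LZ Lp]] := hahn_banach dir_deriv_sublinear.
have LN v : L (- v) = - L v by rewrite -scaleN1r LZ mulN1r.
have Lb v : `|L v| <= M * `|v|.
  rewrite ler_norml (le_trans (Lp v) (dir_deriv_le_norm v)) andbT.
  by have := le_trans (Lp (- v)) (dir_deriv_le_norm (- v)); rewrite LN normrN; lra.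
have [a aL] := bounded_linear_dual M0 LD LZ Lb.
exists a => z; rewrite !aL -LN -LD.
exact: le_trans (Lp _) (dir_deriv_le_diff z).
Qed.

End DirectionalDerivative.
End Subgradient.

Section ConvexMinorant.
Variables (R : realType) (X : normedModType R).

Lemma lower_semicontinuous_ball (f : X -> \bar R) x (a : R) : lower_semicontinuous f ->
  (a%:E < f x)%E -> exists2 r : R, 0 < r & forall z, `|x - z| < r -> (a%:E < f z)%E.
Proof.
move=> lscf /lscf [V /nbhs_ballP [r r0 Vr] HV]; exists r => // z xz.
by apply/HV/Vr; rewrite -ball_normE.
Qed.

Lemma convex_lsc_lower_cone (f : X -> \bar R) y0 : lower_semicontinuous f ->
  (forall x, f x != -oo%E) -> convex_fun f -> f y0 \is a fin_num ->
  exists c0 K : R, 0 <= K /\ forall y, ((c0 - K * `|y - y0|)%:E <= f y)%E.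
Proof.
move=> lscf fNy convf fy0; set a := fine (f y0).
have fy0E : f y0 = a%:E by rewrite /a fineK.
have [r r0 ball_gt] := @lower_semicontinuous_ball f y0 (a - 1) lscf
  (ltac:(by rewrite fy0E lte_fin; lra)).
exists (a - 1), (2 / r); split; first by rewrite divr_ge0 // ltW.
move=> y; set d := `|y - y0|.
have d_ge0 : 0 <= d by rewrite normr_ge0.
case: (ltP d r) => [dr|rd].
  have fy_gt : ((a - 1)%:E < f y)%E by apply: ball_gt; rewrite distrC.
  apply: le_trans (ltW fy_gt).
  have : 0 <= 2 / r * d by rewrite mulr_ge0 // divr_ge0 // ltW.
  by rewrite lee_fin; lra.
have d0 : 0 < d by exact: lt_le_trans rd.
set s := r / (2 * d).
have s0 : 0 < s by rewrite divr_gt0 ?mulr_gt0.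
have s01 : 0 < s < 1 by rewrite s0 /s ltr_pdivrMr ?mulr_gt0 //; lra.
have near_y0 : `|y0 - (s *: y + (1 - s) *: y0)| < r.
  have -> : y0 - (s *: y + (1 - s) *: y0) = s *: (y0 - y).
    by rewrite scalerBl scale1r !scalerBr opprD opprB addrA addrC addrA subrK.
  rewrite normrZ gtr0_norm // distrC -/d /s.
  have -> : r / (2 * d) * d = r / 2 by field; rewrite gt_eqF.
  lra.
have := lt_le_trans (ball_gt _ near_y0) (convf y y0 s s01); rewrite fy0E.
case fyE: (f y) => [b| |]; [|by rewrite leey|by move: (fNy y); rewrite fyE].
rewrite -!EFinM -EFinD !lte_fin lee_fin => cvx.
have sK : s * (2 / r * d) = 1 by rewrite /s; field; rewrite ?mulf_neq0 ?gt_eqF.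
have : s * (a - b) < s * (2 / r * d) by rewrite sK; lra.
by rewrite ltr_pM2l  //; lra.
Qed.

Definition lip_envelope (f : X -> \bar R) (M : R) (z : X) :=
  inf [set fine (f y) + M * `|z - y| | y in [set y | f y \is a fin_num]].

Section LipschitzEnvelope.
Variables (f : X -> \bar R) (y0 : X) (c0 K M : R).
Hypotheses (fy0 : f y0 \is a fin_num) (K0 : 0 <= K) (KM : K <= M)
  (f_cone : forall y, ((c0 - K * `|y - y0|)%:E <= f y)%E).

Let env_set z := [set fine (f y) + M * `|z - y| | y in [set y | f y \is a fin_num]].

Let env_lb z : lbound (env_set z) (c0 - K * `|z - y0|).
Proof.
move=> _ [y fy <-]; have cone : c0 - K * `|y - y0| <= fine (f y).
  by rewrite -lee_fin fineK.
have := ler_distD z y y0; rewrite (distrC y z) => /(ler_wpM2l K0).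
have : K * `|z - y| <= M * `|z - y| by rewrite ler_wpM2r.
rewrite mulrDr; lra.
Qed.

Let env_has_inf z : has_inf (env_set z).
Proof.
split; first by exists (fine (f y0) + M * `|z - y0|), y0.
by exists (c0 - K * `|z - y0|); exact: env_lb.
Qed.

Lemma lip_envelope_le z y : f y \is a fin_num ->
  lip_envelope f M z <= fine (f y) + M * `|z - y|.
Proof. by move=> fy; apply: ge_inf; [case: (env_has_inf z)|exists y]. Qed.

Let le_lip_envelope z b :
  (forall y, f y \is a fin_num -> b <= fine (f y) + M * `|z - y|) ->
  b <= lip_envelope f M z.
Proof. by move=> H; apply: lb_le_inf; [case: (env_has_inf z)|move=> _ [y /H ? <-]]. Qed.

Lemma lip_envelope_le_fun z : ((lip_envelope f M z)%:E <= f z)%E.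
Proof.
case fzE: (f z) => [b| |]; last 2 first.
- by rewrite leey.
- by have := f_cone z; rewrite fzE.
have fz : f z \is a fin_num by rewrite fzE.
by have := lip_envelope_le z fz; rewrite fzE subrr normr0 mulr0 addr0.
Qed.

Lemma lip_envelope_lipschitz : lipschitz_with M (lip_envelope f M).
Proof.
move=> z z'; suff : lip_envelope f M z - M * `|z - z'| <= lip_envelope f M z' by lra.
apply: le_lip_envelope => y fy; have := lip_envelope_le z fy.
have := ler_distD z' z y => /(ler_wpM2l (le_trans K0 KM)).
rewrite mulrDr; lra.
Qed.

Lemma lip_envelope_convex : convex_fun f -> real_convex (lip_envelope f M).
Proof.
move=> convf z1 z2 t t01; have /andP[t0 t1] := t01.
have [t_ge0 t1_ge0] : 0 <= t /\ 0 <= 1 - t by split; lra.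
have M0 : 0 <= M by exact: le_trans K0 KM.
apply/ler_addgt0Pr => e e0.
have [_ [y1 fy1 <-] lt1] := inf_adherent e0 (env_has_inf z1).
have [_ [y2 fy2 <-] lt2] := inf_adherent e0 (env_has_inf z2).
set y := t *: y1 + (1 - t) *: y2.
have cvx := convf y1 y2 t t01.
rewrite -/y -(fineK fy1) -(fineK fy2) -!EFinM -EFinD in cvx.
have [fy fy_le] : f y \is a fin_num /\ fine (f y) <= t * fine (f y1) + (1 - t) * fine (f y2).
  move: cvx (f_cone y); case: (f y) => [b| |] //=; by rewrite lee_fin.
have := lip_envelope_le (t *: z1 + (1 - t) *: z2) fy.
have -> : t *: z1 + (1 - t) *: z2 - y = t *: (z1 - y1) + (1 - t) *: (z2 - y2).
  by rewrite /y !scalerBr opprD addrACA.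
have := ler_normD (t *: (z1 - y1)) ((1 - t) *: (z2 - y2)).
rewrite !normrZ !ger0_norm // => /(ler_wpM2l M0).
have : t * (fine (f y1) + M * `|z1 - y1|) <= t * (lip_envelope f M z1 + e).
  by rewrite ler_wpM2l //; rewrite /lip_envelope; lra.
have : (1 - t) * (fine (f y2) + M * `|z2 - y2|) <= (1 - t) * (lip_envelope f M z2 + e).
  by rewrite ler_wpM2l //; rewrite /lip_envelope; lra.
rewrite !mulrDr !mulrA [M * t]mulrC [M * (1 - t)]mulrC; lra.
Qed.

Lemma lip_envelope_ge x C r : 0 < r ->
  (forall z, `|x - z| < r -> (C%:E < f z)%E) ->
  C - c0 + K * `|x - y0| <= (M - K) * r -> C <= lip_envelope f M x.
Proof.
move=> r0 ball_gt Mr; apply: le_lip_envelope => y fy.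
have M0 : 0 <= M by exact: le_trans K0 KM.
have : 0 <= M * `|x - y| by rewrite mulr_ge0.
case: (ltP `|x - y| r) => [xy|rxy].
  have : C < fine (f y) by rewrite -lte_fin fineK // ball_gt.
  lra.
have cone : c0 - K * `|y - y0| <= fine (f y) by rewrite -lee_fin fineK.
have := ler_distD x y y0; rewrite (distrC y x) => /(ler_wpM2l K0).
have : (M - K) * r <= (M - K) * `|x - y| by rewrite ler_wpM2l // subr_ge0.
rewrite mulrDr !mulrBl; lra.
Qed.

End LipschitzEnvelope.

Lemma lsc_convex_lipschitz_minorant (f : X -> \bar R) x (C : R) :
  lower_semicontinuous f -> proper_fun f -> convex_fun f -> (C%:E < f x)%E ->
  exists (phi : X -> R) (M : R), [/\ 0 <= M, C < phi x,
    forall z, ((phi z)%:E <= f z)%E, lipschitz_with M phi & real_convex phi].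
Proof.
move=> lscf [fNy [y0 fy0]] convf Cfx.
have [c0 [K [K0 cone]]] := convex_lsc_lower_cone lscf fNy convf fy0.
have [C' [CC' C'fx]] : exists C', C < C' /\ (C'%:E < f x)%E.
  move: Cfx; case: (f x) => [b| |] // Cfx.
  + by exists ((C + b) / 2); rewrite !lte_fin in Cfx *; split; lra.
  + by exists (C + 1); split; [lra|rewrite ltry].
have [r r0 ball_gt] := lower_semicontinuous_ball lscf C'fx.
set M := K + `|C' - c0 + K * `|x - y0| | / r.
have KM : K <= M by rewrite lerDl divr_ge0 // ltW.
have Mr : C' - c0 + K * `|x - y0| <= (M - K) * r.
  by rewrite /M [K + _]addrC addrK divfK ?gt_eqF // ler_norm.
exists (lip_envelope f M), M; split.
- exact: le_trans K0 KM.
- exact: lt_le_trans CC' (lip_envelope_ge fy0 K0 KM cone r0 ball_gt Mr).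
- exact: lip_envelope_le_fun fy0 K0 KM cone.
- exact: lip_envelope_lipschitz fy0 K0 KM cone.
- exact: lip_envelope_convex fy0 K0 KM cone convf.
Qed.

Lemma lsc_convex_affine_minorant (f : X -> \bar R) x (C : R) :
  lower_semicontinuous f -> proper_fun f -> convex_fun f -> (C%:E < f x)%E ->
  exists (a : dual X) (c : R), C < c /\ forall z, ((a z - a x + c)%:E <= f z)%E.
Proof.
move=> lscf pf convf Cfx.
have [phi [M [M0 Cphi phi_le phi_lip phi_cvx]]] :=
  lsc_convex_lipschitz_minorant lscf pf convf Cfx.
have [a a_sub] := lipschitz_convex_subgradient x M0 phi_lip phi_cvx.
exists a, (phi x); split=> // z; apply: le_trans (phi_le z).
by rewrite lee_fin; have := a_sub z; lra.
Qed.

Lemma fconj_le_affine (f : X -> \bar R) (a : dual X) x (c : R) :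
  (forall z, ((a z - a x + c)%:E <= f z)%E) -> (fconj f a <= (a x - c)%:E)%E.
Proof.
move=> aff; apply: ge_ereal_sup => _ [z _ <-].
move: (aff z); case: (f z) => [b| |] //=; last by rewrite leNye.
by rewrite -EFinB !lee_fin; lra.
Qed.

End ConvexMinorant.

Lemma eps_subdiff_h_diag_bound (R : realType) (X : normedModType R)
    (f : X -> \bar R) (h : X * dual X -> \bar R) (eps : R) (x : X) (a : dual X) :
  lower_semicontinuous f -> proper_fun f -> convex_fun f ->
  (forall p, (h p <= fFY f p)%E) -> ((a x)%:E <= h (x, a))%E ->
  eps_subdiff_h h eps (x, a) (a, x) ->
  forall y, f y \is a fin_num -> (f x <= (fine (f y) - a y + a x + eps)%:E)%E.
Proof.
move=> lscf pf convf h_le_FY h_ge [hfin h_sub] y fy; rewrite leNgt; apply/negP.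
move=> /(lsc_convex_affine_minorant lscf pf convf) [b [c [Cc aff]]].
have := le_trans (h_sub y b) (h_le_FY (y, b)).
rewrite /fFY /= => /le_trans /(_ (leeD2l (f y) (fconj_le_affine aff))).
have [hxa hxaE] : exists r, h (x, a) = r%:E by exists (fine (h (x, a))); rewrite fineK.
rewrite hxaE -(fineK fy) -EFinD -EFinD lee_fin.
by move: h_ge; rewrite hxaE lee_fin; lra.
Qed.

Theorem theorem4p1 (R : realType) (X : completeNormedModType R)
    (f : X -> \bar R) (h : X * dual X -> \bar R) :
  reflexive_space X ->
  lower_semicontinuous f -> proper_fun f -> convex_fun f ->
  HT (subdiff f) h ->
  (forall p, (h p <= fFY f p)%E) ->
  forall (eps : R) (x : X), 0 < eps ->
    breveT h (eps / 2) x `<=` eps_subdiff f eps x.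
Proof.
move=> _ lscf pf convf [_ [_ [_ [h_ge _]]]] h_le_FY eps x _ a.
rewrite /breveT (_ : 2 * (eps / 2) = eps); last by field.
move=> /(eps_subdiff_h_diag_bound lscf pf convf h_le_FY (h_ge x a)) bound.
have [fNy [y0 fy0]] := pf.
have fx : f x \is a fin_num.
  by move: (bound y0 fy0) (fNy x); case: (f x).
split=> // y; move: (fNy y) (bound y); rewrite -(fineK fx).
case: (f y) => [b| |] //= _; last by rewrite leey.
by move=> /(_ erefl); rewrite -EFinB !lee_fin; lra.
Qed.
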